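(* For any integers $s\ge1$ and $M\ge1$ there exists $\varepsilon>0$ small enough such that on the star graph $G(s,\varepsilon)$ the following hold for the Laplacian $-\frac{\partial^2}{\partial x^2}$: (a) the first $M$ eigenvalues are all simple; (b) the first $M$ eigenfunctions are invariant under permutations of the $s$ small edges; (c) for every $n\le M$, the eigenfunction $f_n$ has exactly $n-1$ zeroes on the long edge and no zeroes on the small edges or at the inner vertex.
   Context: $G(s,\varepsilon)$ is the star graph with one central vertex, one edge of length $1$ and $s$ edges of length $\varepsilon$, each joining the central vertex to a degree-one vertex. The operator $-\frac{d^2}{dx^2}$ acts edgewise with Dirichlet conditions at the degree-one vertices and Neumann–Kirchhoff conditions at the central vertex (continuity and vanishing sum of outgoing derivatives). Eigenvalues are ordered increasingly with multiplicity, $f_n$ being an eigenfunction for the $n$-th one. Zeroes are counted away from the degree-one vertices. *)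

From Stdlib Require Import Reals Lra Lia Arith.
From Coquelicot Require Import Coquelicot.
Open Scope R_scope.

(* Star graph G(s,eps): edge 0 is the long edge (length 1), edges 1..s are the
   short edges (length eps).  Every edge is parametrised by the distance x to
   the central vertex, so x = 0 is the central vertex and x = len e is the
   degree-one vertex of edge e.  A function on the graph is F : nat -> R -> R,
   F e being its restriction to edge e (only e <= s, x in [0, len e] matter). *)
Definition len (eps : R) (e : nat) : R := if Nat.eqb e 0 then 1 else eps.

Definition gfun := nat -> R -> R.

Fixpoint fsum (k : nat) (g : nat -> R) : R :=
  match k with O => 0 | S k => fsum k g + g k end.

(* F lies in the (possibly trivial) solution space of -f'' = lam f with
   Dirichlet conditions at degree-one vertices and Neumann-Kirchhoff
   conditions at the central vertex. *)
Definition in_eigspace (s : nat) (eps lam : R) (F : gfun) : Prop :=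
  (forall e, (e <= s)%nat ->
     exists dF : R -> R, forall x,
       is_derive (F e) x (dF x) /\ is_derive dF x (- lam * F e x))
  /\ (forall e, (e <= s)%nat -> F e (len eps e) = 0)
  /\ (forall e, (e <= s)%nat -> F e 0 = F 0%nat 0)
  /\ fsum (S s) (fun e => Derive (F e) 0) = 0.

Definition nonzero_on_graph (s : nat) (eps : R) (F : gfun) : Prop :=
  exists e x, (e <= s)%nat /\ 0 <= x <= len eps e /\ F e x <> 0.

Definition eigfun (s : nat) (eps lam : R) (F : gfun) : Prop :=
  in_eigspace s eps lam F /\ nonzero_on_graph s eps F.

Definition indep (s : nat) (eps : R) (k : nat) (Fs : nat -> gfun) : Prop :=
  forall c : nat -> R,
    (forall e x, (e <= s)%nat -> 0 <= x <= len eps e ->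
        fsum k (fun i => c i * Fs i e x) = 0) ->
    forall i, (i < k)%nat -> c i = 0.

Definition mult_ge (s : nat) (eps lam : R) (k : nat) : Prop :=
  exists Fs : nat -> gfun,
    (forall i, (i < k)%nat -> in_eigspace s eps lam (Fs i)) /\ indep s eps k Fs.

Definition cnt_lt (s : nat) (eps mu : R) (k : nat) : Prop :=
  exists (lams : nat -> R) (Fs : nat -> gfun),
    (forall i, (i < k)%nat -> lams i < mu /\ eigfun s eps (lams i) (Fs i))
    /\ indep s eps k Fs.

Definition cnt_le (s : nat) (eps mu : R) (k : nat) : Prop :=
  exists (lams : nat -> R) (Fs : nat -> gfun),
    (forall i, (i < k)%nat -> lams i <= mu /\ eigfun s eps (lams i) (Fs i))
    /\ indep s eps k Fs.

(* lam is the n-th eigenvalue (n >= 1), eigenvalues ordered increasingly and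
   repeated according to multiplicity *)
Definition nth_eig (s : nat) (eps : R) (n : nat) (lam : R) : Prop :=
  (exists F, eigfun s eps lam F) /\ cnt_le s eps lam n /\ ~ cnt_lt s eps lam n.

Definition simple_eig (s : nat) (eps lam : R) : Prop :=
  mult_ge s eps lam 1 /\ ~ mult_ge s eps lam 2.

Definition perm_invariant (s : nat) (eps : R) (F : gfun) : Prop :=
  forall sigma : nat -> nat,
    (forall i, (1 <= i <= s)%nat -> (1 <= sigma i <= s)%nat) ->
    (forall i j, (1 <= i <= s)%nat -> (1 <= j <= s)%nat -> sigma i = sigma j -> i = j) ->
    forall i x, (1 <= i <= s)%nat -> 0 <= x <= eps -> F (sigma i) x = F i x.

Definition exactly_zeros_long (m : nat) (F : gfun) : Prop :=
  exists z : nat -> R,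
    (forall i, (i < m)%nat -> 0 < z i < 1 /\ F 0%nat (z i) = 0)
    /\ (forall i, (S i < m)%nat -> z i < z (S i))
    /\ (forall x, 0 < x < 1 -> F 0%nat x = 0 -> exists i, (i < m)%nat /\ x = z i).

Definition no_zeros_small (s : nat) (eps : R) (F : gfun) : Prop :=
  F 0%nat 0 <> 0 /\
  forall e x, (1 <= e <= s)%nat -> 0 <= x < eps -> F e x <> 0.

(* For [lam = k^2 > 0] an eigenfunction is, on each edge, a multiple of the sine of
   [k] times the distance to the leaf; continuity at the centre makes it a multiple of
   one explicit profile, which satisfies the Kirchhoff condition iff
   [cos k sin (k eps) + s sin k cos (k eps) = 0].  Hence (as long as [k eps < PI])
   every eigenvalue is simple with a symmetric eigenfunction, and [lam <= 0] is ruled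
   out by an energy argument.  This secular function has exactly one root in each band
   [(m PI, (m + 1) PI)] with [k eps < PI]: existence (for [(m + 1) eps < 1/2]) by the
   intermediate value theorem, uniqueness by a Wronskian-type identity.  Independence
   of sines on the long edge and a pigeonhole argument over the bands then identify the
   [n]-th eigenvalue with the root in band [n - 1]; the profile [sin (k (1 - x))] has
   [n - 1] zeroes on the long edge and none on the short ones. *)

From Stdlib Require Import Reals Lra Lia ZArith Classical IndefiniteDescription.
From Coquelicot Require Import Coquelicot.
Open Scope R_scope.

Lemma fsum_ext k g g' : (forall i, (i < k)%nat -> g i = g' i) -> fsum k g = fsum k g'.
Proof.
  induction k as [|k IH]; intros H; simpl; [reflexivity|].
  rewrite IH, H; [reflexivity|lia|intros; apply H; lia].
Qed.

Lemma fsum_scal k c g : fsum k (fun i => c * g i) = c * fsum k g.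
Proof. induction k as [|k IH]; simpl; [ring|rewrite IH; ring]. Qed.

Lemma fsum_plus k g h : fsum k (fun i => g i + h i) = fsum k g + fsum k h.
Proof. induction k as [|k IH]; simpl; [ring|rewrite IH; ring]. Qed.

Lemma fsum_eq0 k g : (forall i, (i < k)%nat -> g i = 0) -> fsum k g = 0.
Proof.
  induction k as [|k IH]; intros H; simpl; [reflexivity|].
  rewrite IH, H; [ring|lia|intros; apply H; lia].
Qed.

Lemma fsum_S_const s g C : (forall e, (1 <= e <= s)%nat -> g e = C) ->
  fsum (S s) g = g 0%nat + INR s * C.
Proof.
  induction s as [|s IH]; intros H; [simpl; ring|].
  change (fsum (S (S s)) g) with (fsum (S s) g + g (S s)).
  rewrite IH, (H (S s)), S_INR; [ring|lia|intros; apply H; lia].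
Qed.

Lemma fsum_nonpos k g : (forall i, (i < k)%nat -> g i <= 0) -> fsum k g <= 0.
Proof.
  induction k as [|k IH]; intros H; simpl; [lra|].
  pose proof (IH (fun i hi => H i ltac:(lia))). pose proof (H k ltac:(lia)). lra.
Qed.

Lemma fsum_nonpos_eq0 k g : (forall i, (i < k)%nat -> g i <= 0) -> fsum k g = 0 ->
  forall i, (i < k)%nat -> g i = 0.
Proof.
  induction k as [|k IH]; intros H E i hi; [lia|].
  simpl in E.
  pose proof (fsum_nonpos k g (fun j hj => H j ltac:(lia))). pose proof (H k ltac:(lia)).
  destruct (Nat.eq_dec i k) as [->|hik]; [lra|].
  apply IH; [intros; apply H; lia|lra|lia].
Qed.

Lemma fsum_single n g i : (i < n)%nat -> (forall m, (m < n)%nat -> m <> i -> g m = 0) ->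
  fsum n g = g i.
Proof.
  induction n as [|n IH]; intros hi H; [lia|]. simpl.
  destruct (Nat.eq_dec i n) as [->|hin].
  - rewrite fsum_eq0; [ring|intros; apply H; lia].
  - rewrite IH, (H n); [ring|lia|auto|lia|intros; apply H; lia].
Qed.

Lemma fsum_pair n g i j : (i < j < n)%nat ->
  (forall m, (m < n)%nat -> m <> i -> m <> j -> g m = 0) -> fsum n g = g i + g j.
Proof.
  induction n as [|n IH]; intros hij H; [lia|]. simpl.
  destruct (Nat.eq_dec j n) as [->|hjn].
  - rewrite (fsum_single n g i); [reflexivity|lia|intros; apply H; lia].
  - rewrite IH, (H n); [ring|lia|lia|auto|lia|intros; apply H; lia].
Qed.

(* Coquelicot's [is_derive_plus] and [is_derive_minus] are stated with the generic
   [plus] and [minus], which [apply] does not unify with [Rplus] and [Rminus]. *)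
Lemma is_derive_Rplus (f g : R -> R) x df dg :
  is_derive f x df -> is_derive g x dg -> is_derive (fun t => f t + g t) x (df + dg).
Proof. exact (is_derive_plus f g x df dg). Qed.

Lemma is_derive_Rminus (f g : R -> R) x df dg :
  is_derive f x df -> is_derive g x dg -> is_derive (fun t => f t - g t) x (df - dg).
Proof. exact (is_derive_minus f g x df dg). Qed.

Lemma constant_of_derive_0 (f : R -> R) : (forall x, is_derive f x 0) -> forall x y, f x = f y.
Proof.
  intros H x y. destruct (Rtotal_order x y) as [h|[->|h]]; [| |symmetry];
    solve [reflexivity | apply eq_is_derive; [intros; apply H|exact h]].
Qed.

Lemma nondecreasing_of_derive_nonneg (f df : R -> R) :
  (forall x, is_derive f x (df x)) -> (forall x, 0 <= df x) ->
  forall a b, a <= b -> f a <= f b.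
Proof.
  intros Hd Hp a b hab.
  destruct (MVT_cor4 f df a (b - a) (fun c _ => Hd c) b) as [c [E _]].
  { rewrite Rabs_right; lra. }
  pose proof (Rmult_le_pos (df c) (b - a) (Hp c) ltac:(lra)). lra.
Qed.

Lemma derive_eq0_of_vanish_on_interval (f : R -> R) a b x l :
  (forall y, a < y < b -> f y = 0) -> a < x < b -> is_derive f x l -> l = 0.
Proof.
  intros H hx hd.
  assert (Hloc : locally x (fun t => f t = 0)).
  { apply filter_imp with (fun y => a < y /\ y < b); [intros y hy; apply H, hy|].
    apply open_and; [apply open_gt|apply open_lt|]; tauto. }
  apply (is_derive_ext_loc f (fun _ => 0)) in hd; [|exact Hloc].
  rewrite <- (is_derive_unique _ _ _ hd). apply Derive_const.
Qed.

Lemma is_derive_sin_reflect k L x :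
  is_derive (fun t => sin (k * (L - t))) x (- k * cos (k * (L - x))).
Proof. auto_derive; [exact I|unfold Rminus; ring]. Qed.

Lemma is_derive_cos_reflect k L x :
  is_derive (fun t => cos (k * (L - t))) x (k * sin (k * (L - x))).
Proof. auto_derive; [exact I|unfold Rminus; ring]. Qed.

Section Harmonic.

Variables (k : R) (f df : R -> R).
Hypothesis k_neq0 : k <> 0.
Hypothesis f_harmonic :
  forall x, is_derive f x (df x) /\ is_derive df x (- (k * k) * f x).

(* The energy [f'^2 + k^2 f^2] is conserved. *)
Lemma harmonic_eq0 L : f L = 0 -> df L = 0 -> forall x, f x = 0.
Proof.
  intros hf hdf x.
  set (E := fun t => df t * df t + k * k * (f t * f t)).
  assert (HE : forall t, is_derive E t 0).
  { intro t. destruct (f_harmonic t) as [h1 h2]. unfold E.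
    replace 0 with ((- (k * k) * f t * df t + df t * (- (k * k) * f t))
                    + k * k * (df t * f t + f t * df t)) by ring.
    apply is_derive_Rplus.
    - apply Derive.is_derive_mult; assumption.
    - apply is_derive_scal, Derive.is_derive_mult; assumption. }
  pose proof (constant_of_derive_0 E HE x L) as Ex. unfold E in Ex.
  rewrite hf, hdf in Ex.
  assert (0 < k * k) by (apply Rsqr_pos_lt; exact k_neq0).
  assert (Hsq : f x * f x = 0) by nra.
  destruct (Rmult_integral _ _ Hsq); assumption.
Qed.

End Harmonic.

Lemma harmonic_dirichlet_sin k (f df : R -> R) L : k <> 0 ->
  (forall x, is_derive f x (df x) /\ is_derive df x (- (k * k) * f x)) -> f L = 0 ->
  forall x, f x = (- df L / k) * sin (k * (L - x)).
Proof.
  intros hk Hf hL x. set (A := - df L / k).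
  (* [f] and [A * sin (k * (L - x))] have the same Cauchy data at [L]. *)
  enough (f x - A * sin (k * (L - x)) = 0) by lra.
  apply (harmonic_eq0 k (fun t => f t - A * sin (k * (L - t)))
           (fun t => df t - A * (- k * cos (k * (L - t)))) hk) with L.
  - intro t. destruct (Hf t) as [h1 h2]. split.
    + apply is_derive_Rminus; [exact h1|apply is_derive_scal, is_derive_sin_reflect].
    + replace (- (k * k) * (f t - A * sin (k * (L - t))))
        with (- (k * k) * f t - A * (- k * (k * sin (k * (L - t))))) by ring.
      apply is_derive_Rminus; [exact h2|].
      apply is_derive_scal, is_derive_scal, is_derive_cos_reflect.
  - rewrite hL, Rminus_diag, Rmult_0_r, sin_0. ring.
  - rewrite Rminus_diag, Rmult_0_r, cos_0. unfold A. field. exact hk.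
Qed.

Lemma len_pos eps e : 0 < eps -> 0 < len eps e.
Proof. intros. unfold len. destruct (Nat.eqb e 0); lra. Qed.

Section NonpositiveSpectrum.

Variables (lam : R) (f df : R -> R).
Hypothesis lam_le0 : lam <= 0.
Hypothesis f_eigen : forall x, is_derive f x (df x) /\ is_derive df x (- lam * f x).

(* [(f f')' = f'^2 - lam f^2 >= 0]. *)
Lemma flux_nondecreasing a b : a <= b -> f a * df a <= f b * df b.
Proof.
  apply (nondecreasing_of_derive_nonneg (fun t => f t * df t)
           (fun t => df t * df t + f t * (- lam * f t))).
  - intro t. apply Derive.is_derive_mult; apply f_eigen.
  - intro t. nra.
Qed.

Lemma dirichlet_eq0_of_flux_nonneg L : f L = 0 -> 0 <= f 0 * df 0 ->
  forall x, 0 <= x <= L -> f x = 0.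
Proof.
  intros hL h0 x hx.
  assert (Hflux : forall t, 0 <= t <= L -> f t * df t = 0).
  { intros t ht. apply Rle_antisym.
    - replace 0 with (f L * df L) by (rewrite hL; ring). apply flux_nondecreasing; lra.
    - apply Rle_trans with (f 0 * df 0); [exact h0|apply flux_nondecreasing; lra]. }
  destruct (Req_dec x L) as [->|hxL]; [exact hL|].
  assert (Hsq : f x * f x = f L * f L).
  { apply (eq_is_derive (fun t => f t * f t)); [|lra].
    intros t ht. change (@zero R_NormedModule) with 0.
    replace 0 with (df t * f t + f t * df t) by (rewrite (Rmult_comm (df t)), Hflux by lra; ring).
    apply Derive.is_derive_mult; apply f_eigen. }
  rewrite hL, Rmult_0_r in Hsq. destruct (Rmult_integral _ _ Hsq); assumption.
Qed.

End NonpositiveSpectrum.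

Lemma in_eigspace_nonpos_eq0 s eps lam F : 0 < eps -> lam <= 0 -> in_eigspace s eps lam F ->
  forall e x, (e <= s)%nat -> 0 <= x <= len eps e -> F e x = 0.
Proof.
  intros heps hlam [Hd [Hb [Hc Hk]]].
  assert (Hflux : forall e, (e <= s)%nat -> F e 0 * Derive (F e) 0 <= 0).
  { intros e he. destruct (Hd e he) as [dF HdF].
    rewrite (is_derive_unique _ _ _ (proj1 (HdF 0))).
    apply Rle_trans with (F e (len eps e) * dF (len eps e)).
    - apply (flux_nondecreasing lam); [exact hlam|exact HdF|left; apply len_pos, heps].
    - rewrite Hb by exact he. lra. }
  assert (Hsum : fsum (S s) (fun e => F e 0 * Derive (F e) 0) = 0).
  { rewrite (fsum_ext _ _ (fun e => F 0%nat 0 * Derive (F e) 0)).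
    - rewrite fsum_scal, Hk. ring.
    - intros e he. rewrite Hc by lia. reflexivity. }
  intros e x he hx. destruct (Hd e he) as [dF HdF].
  apply (dirichlet_eq0_of_flux_nonneg lam (F e) dF hlam HdF (len eps e)); [apply Hb, he| |exact hx].
  rewrite <- (is_derive_unique _ _ _ (proj1 (HdF 0))).
  right. symmetry.
  apply (fsum_nonpos_eq0 (S s) (fun e => F e 0 * Derive (F e) 0)); [|exact Hsum|lia].
  intros i hi. apply Hflux. lia.
Qed.

(* Amplitudes are chosen so that every edge takes the value [sin (k eps) * sin k]
   at the central vertex. *)
Definition profile (eps k : R) : gfun := fun e x =>
  if Nat.eqb e 0 then sin (k * eps) * sin (k * (1 - x)) else sin k * sin (k * (eps - x)).

(* The Kirchhoff sum of [profile eps k] is [- k * secular s eps k]. *)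
Definition secular (s : nat) (eps k : R) : R :=
  cos k * sin (k * eps) + INR s * sin k * cos (k * eps).

Definition profile_multiple (s : nat) (eps k c : R) (F : gfun) : Prop :=
  forall e x, (e <= s)%nat -> F e x = c * profile eps k e x.

Lemma Derive_sin_reflect_0 A k L :
  Derive (fun x => A * sin (k * (L - x))) 0 = - A * k * cos (k * L).
Proof.
  apply is_derive_unique. replace (- A * k * cos (k * L)) with (A * (- k * cos (k * (L - 0))))
    by (rewrite Rminus_0_r; ring).
  apply is_derive_scal, is_derive_sin_reflect.
Qed.

Lemma profile_center eps k e : profile eps k e 0 = sin (k * eps) * sin k.
Proof.
  unfold profile. destruct (Nat.eqb e 0); rewrite Rminus_0_r; [rewrite Rmult_1_r|]; ring.
Qed.

Lemma in_eigspace_profile s eps k : secular s eps k = 0 ->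
  in_eigspace s eps (k * k) (profile eps k).
Proof.
  intros Hsec. split; [|split; [|split]].
  - intros e _. unfold profile. destruct (Nat.eqb e 0);
      [set (A := sin (k * eps)); set (L := 1)|set (A := sin k); set (L := eps)];
      exists (fun x => A * (- k * cos (k * (L - x)))); intro x;
      (split; [apply is_derive_scal, is_derive_sin_reflect|]);
      replace (- (k * k) * (A * sin (k * (L - x)))) with (A * (- k * (k * sin (k * (L - x)))))
        by ring;
      apply is_derive_scal, is_derive_scal, is_derive_cos_reflect.
  - intros e _. unfold profile, len.
    destruct (Nat.eqb e 0); rewrite Rminus_diag, Rmult_0_r, sin_0; ring.
  - intros e _. rewrite !profile_center. reflexivity.
  - rewrite (fsum_S_const s _ (- sin k * k * cos (k * eps))).
    + unfold profile at 1. simpl. rewrite Derive_sin_reflect_0, Rmult_1_r.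
      transitivity (- k * secular s eps k); [unfold secular; ring|rewrite Hsec; ring].
    + intros e he. unfold profile. destruct (Nat.eqb_spec e 0); [lia|].
      apply Derive_sin_reflect_0.
Qed.

Lemma in_eigspace_profile_multiple s eps k F : 0 < k -> 0 < sin (k * eps) ->
  in_eigspace s eps (k * k) F -> exists c, profile_multiple s eps k c F /\ c * secular s eps k = 0.
Proof.
  intros hk hse [Hd [Hb [Hc Hk]]].
  assert (Hsin : forall e, (e <= s)%nat ->
            exists A, forall x, F e x = A * sin (k * (len eps e - x))).
  { intros e he. destruct (Hd e he) as [dF HdF].
    exists (- dF (len eps e) / k). apply harmonic_dirichlet_sin; [lra|exact HdF|apply Hb, he]. }
  destruct (Hsin 0%nat ltac:(lia)) as [A0 HA0]. unfold len in HA0; simpl in HA0.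
  set (c := A0 / sin (k * eps)).
  assert (Hsmall : forall e x, (1 <= e <= s)%nat -> F e x = c * sin k * sin (k * (eps - x))).
  { intros e x he. destruct (Hsin e ltac:(lia)) as [Ae HAe].
    replace (len eps e) with eps in HAe by (unfold len; destruct e; [lia|reflexivity]).
    assert (Ecenter := Hc e ltac:(lia)).
    rewrite HAe, HA0, !Rminus_0_r, Rmult_1_r in Ecenter.
    assert (Ae = c * sin k)
      by (unfold c; apply (Rmult_eq_reg_r (sin (k * eps))); [field_simplify; lra|lra]).
    rewrite HAe. subst Ae. reflexivity. }
  exists c. split.
  - intros e x he. unfold profile. destruct (Nat.eqb_spec e 0) as [->|hne].
    + rewrite HA0. unfold c. field. lra.
    + rewrite Hsmall by lia. ring.
  - rewrite (fsum_S_const s _ (- (c * sin k) * k * cos (k * eps))) in Hk.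
    + rewrite (Derive_ext _ _ 0 HA0), Derive_sin_reflect_0 in Hk.
      replace A0 with (c * sin (k * eps)) in Hk by (unfold c; field; lra).
      apply (Rmult_eq_reg_l (- k)); [|lra]. unfold secular.
      rewrite Rmult_0_r, <- Hk, Rmult_1_r. ring.
    + intros e he. rewrite (Derive_ext _ (fun x => (c * sin k) * sin (k * (eps - x))) 0).
      * apply Derive_sin_reflect_0.
      * intro t. rewrite Hsmall by lia. ring.
Qed.

Lemma is_derive_fsum m (g : nat -> R -> R) (dg : nat -> R) x :
  (forall j, is_derive (g j) x (dg j)) ->
  is_derive (fun y => fsum m (fun j => g j y)) x (fsum m dg).
Proof.
  intros H. induction m as [|m IH]; simpl.
  - apply (is_derive_const (V := R_NormedModule) 0 x).
  - apply is_derive_Rplus; [exact IH|apply H].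
Qed.

Lemma sin_combination_derivatives n (a k : nat -> R) al be :
  (forall y, al < y < be -> fsum n (fun j => a j * sin (k j * y)) = 0) ->
  forall y, al < y < be ->
    fsum n (fun j => a j * k j * cos (k j * y)) = 0 /\
    fsum n (fun j => a j * (k j * k j) * sin (k j * y)) = 0.
Proof.
  intros H.
  assert (Z1 : forall y, al < y < be -> fsum n (fun j => a j * k j * cos (k j * y)) = 0).
  { intros y hy. apply (derive_eq0_of_vanish_on_interval _ al be y _ H hy).
    apply (is_derive_fsum n (fun j y => a j * sin (k j * y))).
    intro j. auto_derive; [exact I|ring]. }
  intros y hy. split; [exact (Z1 y hy)|].
  pose proof (derive_eq0_of_vanish_on_interval _ al be y _ Z1 hy
    (is_derive_fsum n (fun j y => a j * k j * cos (k j * y))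
       (fun j => -1 * (a j * (k j * k j) * sin (k j * y))) y
       ltac:(intro j; auto_derive; [exact I|ring]))) as D.
  rewrite fsum_scal in D. lra.
Qed.

Lemma sin_combination_eq0 n : forall (a k : nat -> R) al be, al < be ->
  (forall i, (i < n)%nat -> 0 < k i) -> (forall i j, (i < j < n)%nat -> k i < k j) ->
  (forall y, al < y < be -> fsum n (fun j => a j * sin (k j * y)) = 0) ->
  forall j, (j < n)%nat -> a j = 0.
Proof.
  induction n as [|n IH]; intros a k al be hab hk hinc H j hj; [lia|].
  pose proof (sin_combination_derivatives (S n) a k al be H) as Hder.
  (* [k_n^2 f + f''] kills the top frequency. *)
  assert (Hlow : forall j, (j < n)%nat -> a j * (k n * k n - k j * k j) = 0).
  { apply (IH _ k al be hab); [intros; apply hk; lia|intros; apply hinc; lia|].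
    intros y hy.
    assert (E : fsum (S n) (fun j => a j * (k n * k n - k j * k j) * sin (k j * y))
                = k n * k n * fsum (S n) (fun j => a j * sin (k j * y))
                  + -1 * fsum (S n) (fun j => a j * (k j * k j) * sin (k j * y))).
    { rewrite <- !fsum_scal, <- fsum_plus. apply fsum_ext. intros. ring. }
    rewrite H, (proj2 (Hder y hy)) in E by exact hy.
    simpl in E. rewrite Rminus_diag in E. lra. }
  assert (Ha : forall j, (j < n)%nat -> a j = 0).
  { intros i hi. pose proof (hk i ltac:(lia)). pose proof (hinc i n ltac:(lia)).
    destruct (Rmult_integral _ _ (Hlow i hi)); [assumption|nra]. }
  destruct (Nat.eq_dec j n) as [->|hjn]; [|apply Ha; lia].
  set (y := (al + be) / 2). assert (hy : al < y < be) by (unfold y; lra).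
  pose proof (H y hy) as E0. pose proof (proj1 (Hder y hy)) as E1. simpl in E0, E1.
  rewrite fsum_eq0 in E0, E1 by (intros; rewrite Ha by assumption; ring).
  pose proof (hk n ltac:(lia)). pose proof (sin2_cos2 (k n * y)) as Hsc. unfold Rsqr in Hsc.
  assert (a n * cos (k n * y) = 0) by (apply (Rmult_eq_reg_l (k n)); lra).
  nra.
Qed.

Lemma profile_indep s eps n (k : nat -> R) :
  (forall i, (i < n)%nat -> 0 < k i) -> (forall i, (i < n)%nat -> 0 < sin (k i * eps)) ->
  (forall i j, (i < j < n)%nat -> k i < k j) ->
  indep s eps n (fun i => profile eps (k i)).
Proof.
  intros hpos hsin hinc c Hc i hi.
  assert (Z : forall j, (j < n)%nat -> c j * sin (k j * eps) = 0).
  { apply (sin_combination_eq0 n _ k 0 1); [lra|exact hpos|exact hinc|].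
    intros y hy. rewrite <- (Hc 0%nat (1 - y)); [|lia|unfold len; simpl; lra].
    apply fsum_ext. intros j hj. unfold profile. simpl.
    replace (1 - (1 - y)) with y by ring. ring. }
  pose proof (hsin i hi). destruct (Rmult_integral _ _ (Z i hi)); [assumption|lra].
Qed.

Lemma sin_plus_INR_PI m x : sin (x + INR m * PI) = (-1) ^ m * sin x.
Proof.
  induction m as [|m IH]; [simpl; rewrite Rmult_0_l, Rplus_0_r; ring|].
  rewrite S_INR. replace (x + (INR m + 1) * PI) with ((x + INR m * PI) + PI) by ring.
  rewrite neg_sin, IH. simpl. ring.
Qed.

Lemma cos_plus_INR_PI m x : cos (x + INR m * PI) = (-1) ^ m * cos x.
Proof.
  induction m as [|m IH]; [simpl; rewrite Rmult_0_l, Rplus_0_r; ring|].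
  rewrite S_INR. replace (x + (INR m + 1) * PI) with ((x + INR m * PI) + PI) by ring.
  rewrite neg_cos, IH. simpl. ring.
Qed.

Lemma sin_INR_PI m : sin (INR m * PI) = 0.
Proof. rewrite <- (Rplus_0_l (INR m * PI)), sin_plus_INR_PI, sin_0. ring. Qed.

Lemma cos_INR_PI m : cos (INR m * PI) = (-1) ^ m.
Proof. rewrite <- (Rplus_0_l (INR m * PI)), cos_plus_INR_PI, cos_0. ring. Qed.

Lemma pow_m1_sqr m : (-1) ^ m * (-1) ^ m = 1.
Proof. rewrite <- pow_add. replace (m + m)%nat with (2 * m)%nat by lia. apply pow_1_even. Qed.

Definition in_band (m : nat) (k : R) : Prop := INR m * PI < k < INR m * PI + PI.

Lemma in_band_pos m k : in_band m k -> 0 < k.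
Proof. intros [h _]. pose proof PI_RGT_0. pose proof (pos_INR m). nra. Qed.

Lemma sin_mul_pos_in_band m k k' : in_band m k -> in_band m k' -> 0 < sin k * sin k'.
Proof.
  intros h h'.
  replace k with ((k - INR m * PI) + INR m * PI) by ring.
  replace k' with ((k' - INR m * PI) + INR m * PI) by ring.
  rewrite !sin_plus_INR_PI.
  replace ((-1) ^ m * sin (k - INR m * PI) * ((-1) ^ m * sin (k' - INR m * PI)))
    with ((-1) ^ m * (-1) ^ m * (sin (k - INR m * PI) * sin (k' - INR m * PI))) by ring.
  rewrite pow_m1_sqr, Rmult_1_l. unfold in_band in *.
  apply Rmult_lt_0_compat; apply sin_gt_0; lra.
Qed.

Lemma in_band_sin_neq0 m k : in_band m k -> sin k <> 0.
Proof.
  intros h E. pose proof (sin_mul_pos_in_band m k k h h) as P. rewrite E in P. lra.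
Qed.

Lemma in_band_lt m m' k k' : (m < m')%nat -> in_band m k -> in_band m' k' -> k < k'.
Proof.
  intros hm [_ h] [h' _]. apply (le_INR (S m)) in hm. rewrite S_INR in hm.
  pose proof PI_RGT_0. nra.
Qed.

Lemma IVT_opposite_signs (f : R -> R) a b : continuity f -> a < b -> f a * f b < 0 ->
  exists z, a < z < b /\ f z = 0.
Proof.
  intros hc hab hp.
  assert (Hgen : forall g : R -> R, continuity g -> g a < 0 -> 0 < g b ->
            exists z, a < z < b /\ g z = 0).
  { intros g hg ha hb. destruct (IVT g a b hg hab ha hb) as [z [[h1 h2] E]].
    exists z. split; [|exact E]. split.
    - destruct h1 as [h1| ->]; [exact h1|lra].
    - destruct h2 as [h2| ->]; [exact h2|lra]. }
  destruct (Rlt_or_le (f a) 0) as [h|h].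
  - apply Hgen; [exact hc|exact h|nra].
  - assert (f a <> 0) by (intro E; rewrite E in hp; lra).
    destruct (Hgen (fun t => - f t)) as [z [hz E]]; [apply continuity_opp, hc|lra|nra|].
    exists z. split; [exact hz|lra].
Qed.

Section Secular.

Variables (s : nat) (eps : R).
Hypothesis s_ge1 : (1 <= s)%nat.
Hypothesis eps_pos : 0 < eps.

Lemma secular_continuous : continuity (secular s eps).
Proof. unfold secular. reg. Qed.

Lemma secular_root_exists m : (INR m + 1) * eps < / 2 ->
  exists k, INR m * PI + PI / 2 < k < INR m * PI + PI /\ secular s eps k = 0.
Proof.
  intros hme. pose proof PI_RGT_0. pose proof (pos_INR m).
  assert (0 <= INR m * PI) by (apply Rmult_le_pos; lra).
  assert (hs : 1 <= INR s) by (apply (le_INR 1); exact s_ge1).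
  set (a := PI / 2 + INR m * PI). set (b := INR m * PI + PI).
  assert (hbe : b * eps < PI / 2) by (unfold b; nra).
  destruct (IVT_opposite_signs (secular s eps) a b secular_continuous) as [k [hk E]].
  - unfold a, b. lra.
  - assert (0 < a * eps) by (apply Rmult_lt_0_compat; unfold a; lra).
    assert (a * eps < b * eps) by (apply Rmult_lt_compat_r; unfold a, b; lra).
    assert (0 < cos (a * eps)) by (apply cos_gt_0; lra).
    assert (0 < sin (b * eps)) by (apply sin_gt_0; lra).
    assert (ca : cos a = 0) by (unfold a; rewrite cos_plus_INR_PI, cos_PI2; ring).
    assert (sa : sin a = (-1) ^ m) by (unfold a; rewrite sin_plus_INR_PI, sin_PI2; ring).
    assert (cb : cos b = - (-1) ^ m) by (unfold b; rewrite neg_cos, cos_INR_PI; reflexivity).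
    assert (sb : sin b = 0) by (unfold b; rewrite neg_sin, sin_INR_PI; ring).
    unfold secular. rewrite ca, sa, cb, sb.
    replace ((0 * sin (a * eps) + INR s * (-1) ^ m * cos (a * eps)) *
             (- (-1) ^ m * sin (b * eps) + INR s * 0 * cos (b * eps)))
      with (- (INR s * cos (a * eps) * sin (b * eps)) * ((-1) ^ m * (-1) ^ m)) by ring.
    rewrite pow_m1_sqr. pose proof (Rmult_lt_0_compat (INR s * cos (a * eps)) (sin (b * eps))).
    nra.
  - exists k. unfold a, b in *. split; [lra|exact E].
Qed.

Lemma secular_INR_PI_neq0 m : 0 < INR m * PI * eps < PI -> secular s eps (INR m * PI) <> 0.
Proof.
  intros h E. unfold secular in E. rewrite sin_INR_PI, cos_INR_PI in E.
  assert (0 < sin (INR m * PI * eps)) by (apply sin_gt_0; lra).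
  assert (E' : (-1) ^ m * sin (INR m * PI * eps) = 0) by lra.
  pose proof (pow_m1_sqr m) as Q.
  destruct (Rmult_integral _ _ E') as [Z|Z]; rewrite Z in *; lra.
Qed.

Lemma secular_root_in_band k : 0 < k -> k * eps < PI -> secular s eps k = 0 ->
  exists m, in_band m k.
Proof.
  intros hk hke E. pose proof PI_RGT_0.
  destruct (INR_archimed PI k) as [N hN]; [lra|].
  induction N as [|N IH]; [simpl in hN; lra|].
  destruct (Rlt_or_le k (INR N * PI)) as [h|h]; [exact (IH h)|].
  exists N. split; [|rewrite S_INR in hN; lra].
  destruct h as [h| <-]; [exact h|].
  exfalso. apply (secular_INR_PI_neq0 N); [split; [nra|exact hke]|exact E].
Qed.

Lemma secular_wronskian k k' :
  sin (k' - k) * sin (k * eps) * sin (k' * eps)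
    + INR s * (sin k * sin k') * sin (k' * eps - k * eps)
  = sin k' * sin (k' * eps) * secular s eps k - sin k * sin (k * eps) * secular s eps k'.
Proof. unfold secular. rewrite !sin_minus. ring. Qed.

Lemma secular_roots_not_lt m k k' : in_band m k -> in_band m k' -> k' * eps < PI -> k < k' ->
  secular s eps k = 0 -> secular s eps k' = 0 -> False.
Proof.
  intros hk hk' hk'e hlt E E'. pose proof (in_band_pos m k hk).
  pose proof (secular_wronskian k k') as W. rewrite E, E' in W.
  assert (hs : 1 <= INR s) by (apply (le_INR 1); exact s_ge1).
  assert (h1 : 0 < sin (k' - k)) by (apply sin_gt_0; unfold in_band in *; lra).
  assert (h2 : 0 < sin (k * eps)) by (apply sin_gt_0; nra).
  assert (h3 : 0 < sin (k' * eps)) by (apply sin_gt_0; nra).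
  assert (h4 : 0 < sin (k' * eps - k * eps)) by (apply sin_gt_0; nra).
  pose proof (sin_mul_pos_in_band m k k' hk hk') as h5.
  pose proof (Rmult_lt_0_compat _ _ (Rmult_lt_0_compat _ _ h1 h2) h3).
  pose proof (Rmult_lt_0_compat _ _ (Rmult_lt_0_compat (INR s) _ ltac:(lra) h5) h4).
  lra.
Qed.

Lemma secular_root_unique m k k' : in_band m k -> in_band m k' ->
  k * eps < PI -> k' * eps < PI -> secular s eps k = 0 -> secular s eps k' = 0 -> k = k'.
Proof.
  intros hk hk' hke hk'e E E'.
  destruct (Rtotal_order k k') as [h|[h|h]]; [exfalso|exact h|exfalso].
  - exact (secular_roots_not_lt m k k' hk hk' hk'e h E E').
  - exact (secular_roots_not_lt m k' k hk' hk hke h E' E).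
Qed.

End Secular.

Lemma pigeonhole n (R : nat -> nat -> Prop) :
  (forall i, (i < S n)%nat -> exists m, (m < n)%nat /\ R i m) ->
  exists i j m, (i < j < S n)%nat /\ R i m /\ R j m.
Proof.
  revert R. induction n as [|n IH]; intros R H.
  - destruct (H 0%nat) as [m [hm _]]; lia.
  - destruct (H (S n)) as [m0 [hm0 R0]]; [lia|].
    destruct (classic (exists i, (i < S n)%nat /\ R i m0)) as [[i [hi Ri]]|Hnone].
    + exists i, (S n), m0. split; [lia|split; assumption].
    + (* Boxes above [m0] are shifted down by one. *)
      set (R' := fun i m' => exists m, R i m /\ (m < S n)%nat /\ m <> m0 /\
                                       m' = (if (m <? m0)%nat then m else pred m)).
      destruct (IH R') as [i [j [m' [hij [[mi [Ri [hmi [hmi0 ->]]]] [mj [Rj [hmj [hmj0 Ej]]]]]]]]].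
      * intros i hi. destruct (H i ltac:(lia)) as [m [hm Rm]].
        assert (m <> m0) by (intros ->; apply Hnone; exists i; split; [lia|exact Rm]).
        exists (if (m <? m0)%nat then m else pred m). split.
        -- destruct (Nat.ltb_spec m m0); lia.
        -- exists m. repeat split; assumption.
      * assert (mi = mj) as <- by (destruct (Nat.ltb_spec mi m0), (Nat.ltb_spec mj m0); lia).
        exists i, j, mi. split; [lia|split; assumption].
Qed.

Lemma profile_multiples_not_indep s eps k n Fs i j c c' : (i < j < n)%nat ->
  profile_multiple s eps k c (Fs i) -> profile_multiple s eps k c' (Fs j) -> ~ indep s eps n Fs.
Proof.
  intros hij Hi Hj Hind.
  assert (c = 0) as Hc0.
  { set (d := fun l => if (l =? i)%nat then c' else if (l =? j)%nat then - c else 0).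
    replace c with (- d j) by (unfold d; rewrite Nat.eqb_refl;
                               destruct (Nat.eqb_spec j i); [lia|ring]).
    rewrite (Hind d); [ring| |lia]. intros e x he _.
    rewrite (fsum_pair _ _ i j); [|lia|].
    - unfold d. rewrite Nat.eqb_refl. destruct (Nat.eqb_spec j i); [lia|].
      rewrite Nat.eqb_refl, Hi, Hj by exact he. ring.
    - intros l _ hli hlj. unfold d.
      destruct (Nat.eqb_spec l i); [lia|]. destruct (Nat.eqb_spec l j); [lia|]. ring. }
  assert (E : (fun l => if (l =? i)%nat then 1 else 0) i = 0).
  { apply (Hind (fun l => if (l =? i)%nat then 1 else 0)); [|lia]. intros e x he _.
    rewrite (fsum_single _ _ i); [|lia|].
    - rewrite Nat.eqb_refl, Hi, Hc0 by exact he. ring.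
    - intros l _ hli. destruct (Nat.eqb_spec l i); [lia|ring]. }
  cbv beta in E. rewrite Nat.eqb_refl in E. lra.
Qed.

Lemma perm_invariant_profile_multiple s eps k c F :
  profile_multiple s eps k c F -> perm_invariant s eps F.
Proof.
  intros HF sigma hrange _ i x hi _. destruct (hrange i hi).
  rewrite !HF by lia. unfold profile.
  destruct (Nat.eqb_spec (sigma i) 0), (Nat.eqb_spec i 0); [lia..|reflexivity].
Qed.

Lemma exactly_zeros_long_sin m k C (F : gfun) : in_band m k -> C <> 0 ->
  (forall x, F 0%nat x = C * sin (k * (1 - x))) -> exactly_zeros_long m F.
Proof.
  intros hk hC HF. pose proof PI_RGT_0. pose proof (in_band_pos m k hk). destruct hk as [hk1 hk2].
  exists (fun i => 1 - INR (m - i) * PI / k). split; [|split].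
  - intros i hi.
    assert (1 <= INR (m - i) <= INR m) by (split; [apply (le_INR 1)|apply le_INR]; lia).
    assert (0 < INR (m - i) * PI / k < 1).
    { split; [apply Rdiv_lt_0_compat; nra|].
      apply (Rmult_lt_reg_r k); [lra|]. field_simplify; nra. }
    split; [lra|].
    rewrite HF. replace (k * (1 - (1 - INR (m - i) * PI / k))) with (INR (m - i) * PI)
      by (field; lra).
    rewrite sin_INR_PI. ring.
  - intros i hi. assert (HS : INR (m - S i) + 1 = INR (m - i)) by (rewrite <- S_INR; f_equal; lia).
    rewrite <- HS. unfold Rdiv. rewrite Rmult_plus_distr_r, Rmult_plus_distr_r, Rmult_1_l.
    pose proof (Rdiv_lt_0_compat PI k ltac:(lra) ltac:(lra)). unfold Rdiv in *. lra.
  - intros x hx Ex. rewrite HF in Ex.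
    destruct (Rmult_integral _ _ Ex) as [|Hs0]; [contradiction|].
    destruct (sin_eq_0_0 _ Hs0) as [z Hz].
    assert (zpos : (0 < z)%Z) by (apply lt_IZR; nra).
    assert (zle : (z <= Z.of_nat m)%Z).
    { apply Zlt_succ_le, lt_IZR. rewrite succ_IZR, <- INR_IZR_INZ. nra. }
    exists (m - Z.to_nat z)%nat. split; [lia|].
    replace (INR (m - (m - Z.to_nat z))) with (IZR z)
      by (replace (m - (m - Z.to_nat z))%nat with (Z.to_nat z) by lia;
          rewrite INR_IZR_INZ, Z2Nat.id by lia; reflexivity).
    rewrite <- Hz. field. lra.
Qed.

Lemma eigfun_below s eps lam K F : 0 < eps -> 0 <= K -> K * eps <= PI -> lam < K * K ->
  eigfun s eps lam F ->
  exists m ka c, ka < K /\ lam = ka * ka /\ in_band m ka /\ ka * eps < PI /\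
    secular s eps ka = 0 /\ c <> 0 /\ profile_multiple s eps ka c F.
Proof.
  intros heps hK hKe hlam [HF [e [x [he [hx Hnz]]]]].
  destruct (Rle_or_lt lam 0) as [hneg|hpos].
  { exfalso. exact (Hnz (in_eigspace_nonpos_eq0 s eps lam F heps hneg HF e x he hx)). }
  set (ka := sqrt lam).
  assert (hka : ka * ka = lam) by (apply sqrt_sqrt; lra).
  assert (kapos : 0 < ka) by (apply sqrt_lt_R0, hpos).
  assert (kaK : ka < K) by nra.
  assert (kae : ka * eps < PI) by nra.
  rewrite <- hka in HF.
  destruct (in_eigspace_profile_multiple s eps ka F kapos ltac:(apply sin_gt_0; nra) HF)
    as [c [Hc Hsec]].
  assert (hc : c <> 0) by (intros ->; apply Hnz; rewrite Hc by exact he; ring).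
  assert (Hroot : secular s eps ka = 0)
    by (destruct (Rmult_integral _ _ Hsec); [contradiction|assumption]).
  destruct (secular_root_in_band s eps heps ka kapos kae Hroot) as [m hm].
  exists m, ka, c. split; [exact kaK|split; [lra|]]. tauto.
Qed.

Section Mode.

Variables (s m : nat) (eps k : R).
Hypothesis s_ge1 : (1 <= s)%nat.
Hypothesis eps_pos : 0 < eps.
Hypothesis k_band : in_band m k.
Hypothesis k_eps : k * eps < PI.
Hypothesis k_root : secular s eps k = 0.

Let k_pos : 0 < k := in_band_pos m k k_band.

Let sin_k_eps_pos : 0 < sin (k * eps).
Proof. apply sin_gt_0; [apply Rmult_lt_0_compat|]; assumption. Qed.

Let profile_center_neq0 : profile eps k 0%nat 0 <> 0.
Proof.
  rewrite profile_center. apply Rmult_integral_contrapositive.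
  split; [lra|exact (in_band_sin_neq0 m k k_band)].
Qed.

Lemma eigfun_profile : eigfun s eps (k * k) (profile eps k).
Proof using eps_pos k_band k_eps k_root.
  split; [exact (in_eigspace_profile s eps k k_root)|].
  exists 0%nat, 0.
  split; [apply Nat.le_0_l|split; [unfold len; simpl; lra|exact profile_center_neq0]].
Qed.

Lemma in_eigspace_mode F : in_eigspace s eps (k * k) F -> exists c, profile_multiple s eps k c F.
Proof.
  intros HF. destruct (in_eigspace_profile_multiple s eps k F k_pos sin_k_eps_pos HF) as [c [Hc _]].
  exists c. exact Hc.
Qed.

Lemma eigfun_mode F : eigfun s eps (k * k) F -> exists c, c <> 0 /\ profile_multiple s eps k c F.
Proof.
  intros [HF [e [x [he [_ Hnz]]]]]. destruct (in_eigspace_mode F HF) as [c Hc].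
  exists c. split; [|exact Hc]. intros ->. apply Hnz. rewrite Hc by exact he. ring.
Qed.

Lemma simple_eig_mode : simple_eig s eps (k * k).
Proof.
  split.
  - exists (fun _ => profile eps k). split; [intros; exact (in_eigspace_profile s eps k k_root)|].
    intros c Hc i hi. replace i with 0%nat by lia.
    specialize (Hc 0%nat 0 ltac:(lia) ltac:(unfold len; simpl; lra)). simpl in Hc.
    rewrite Rplus_0_l in Hc. destruct (Rmult_integral _ _ Hc); [assumption|contradiction].
  - intros [Fs [HF Hind]].
    destruct (in_eigspace_mode (Fs 0%nat) (HF 0%nat ltac:(lia))) as [c0 H0].
    destruct (in_eigspace_mode (Fs 1%nat) (HF 1%nat ltac:(lia))) as [c1 H1].
    exact (profile_multiples_not_indep s eps k 2 Fs 0 1 c0 c1 ltac:(lia) H0 H1 Hind).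
Qed.

Lemma no_zeros_small_mode c F : c <> 0 -> profile_multiple s eps k c F -> no_zeros_small s eps F.
Proof.
  intros hc HF. split.
  - rewrite HF by lia. apply Rmult_integral_contrapositive.
    split; [exact hc|exact profile_center_neq0].
  - intros e x he hx. rewrite HF by lia. unfold profile. destruct (Nat.eqb_spec e 0); [lia|].
    pose proof k_pos. assert (0 < sin (k * (eps - x))) by (apply sin_gt_0; nra).
    apply Rmult_integral_contrapositive. split; [exact hc|].
    apply Rmult_integral_contrapositive. split; [exact (in_band_sin_neq0 m k k_band)|lra].
Qed.

Lemma eigfun_mode_shape F : eigfun s eps (k * k) F ->
  perm_invariant s eps F /\ exactly_zeros_long m F /\ no_zeros_small s eps F.
Proof.
  intros HF. destruct (eigfun_mode F HF) as [c [hc Hc]]. split; [|split].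
  - exact (perm_invariant_profile_multiple s eps k c F Hc).
  - apply (exactly_zeros_long_sin m k (c * sin (k * eps))); [exact k_band| |].
    + apply Rmult_integral_contrapositive. split; lra.
    + intro x. rewrite Hc by lia. unfold profile. simpl. ring.
  - exact (no_zeros_small_mode c F hc Hc).
Qed.

(* An eigenvalue below [k^2] comes from a root of [secular] in a band [m' < m]; among
   [m + 1] of them two share a band, hence a root, hence are proportional. *)
Lemma not_cnt_lt_mode : ~ cnt_lt s eps (k * k) (S m).
Proof.
  intros [lams [Fs [HF Hind]]].
  destruct (pigeonhole m (fun i m' => exists ka c, in_band m' ka /\ ka * eps < PI /\
              secular s eps ka = 0 /\ profile_multiple s eps ka c (Fs i)))
    as [i [j [m' [hij [[ka [c [hka [hkae [Hka Hi]]]]] [ka' [c' [hka' [hkae' [Hka' Hj]]]]]]]]]].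
  - intros i hi. destruct (HF i hi) as [hlam HFi].
    destruct (eigfun_below s eps (lams i) k (Fs i) eps_pos ltac:(lra) ltac:(lra) hlam HFi)
      as [m' [ka [c [hk [_ [hka [hkae [Hka [_ Hc]]]]]]]]].
    exists m'. split; [|exists ka, c; tauto].
    destruct (Nat.lt_ge_cases m' m) as [hm'|hm']; [exact hm'|exfalso].
    destruct (Nat.eq_dec m' m) as [->|hne].
    + pose proof (secular_root_unique s eps s_ge1 eps_pos m ka k hka k_band hkae k_eps Hka k_root).
      lra.
    + pose proof (in_band_lt m m' k ka ltac:(lia) k_band hka). lra.
  - rewrite <- (secular_root_unique s eps s_ge1 eps_pos m' ka ka' hka hka' hkae hkae' Hka Hka')
      in Hj.
    exact (profile_multiples_not_indep s eps ka (S m) Fs i j c c' hij Hi Hj Hind).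
Qed.

End Mode.

Lemma cnt_le_modes s eps m (kf : nat -> R) : 0 < eps ->
  (forall i, (i <= m)%nat -> in_band i (kf i) /\ kf i * eps < PI /\ secular s eps (kf i) = 0) ->
  cnt_le s eps (kf m * kf m) (S m).
Proof.
  intros heps Hkf.
  assert (Hmono : forall i j, (i < j <= m)%nat -> kf i < kf j)
    by (intros i j hij; apply (in_band_lt i j); [lia|apply Hkf; lia..]).
  exists (fun i => kf i * kf i), (fun i => profile eps (kf i)). split.
  - intros i hi. destruct (Hkf i ltac:(lia)) as [hb [he hr]]. split.
    + pose proof (in_band_pos i (kf i) hb).
      destruct (Nat.eq_dec i m) as [->|hne]; [lra|].
      pose proof (Hmono i m ltac:(lia)). nra.
    + exact (eigfun_profile s i eps (kf i) heps hb he hr).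
  - apply profile_indep.
    + intros i hi. apply (in_band_pos i), Hkf. lia.
    + intros i hi. destruct (Hkf i ltac:(lia)) as [hb [he _]].
      apply sin_gt_0; [apply Rmult_lt_0_compat; [exact (in_band_pos i _ hb)|exact heps]|exact he].
    + intros i j hij. apply Hmono. lia.
Qed.

Lemma secular_roots s eps M : (1 <= s)%nat -> 0 < eps -> INR M * eps < / 2 ->
  exists kf : nat -> R, forall m, (m < M)%nat ->
    in_band m (kf m) /\ kf m * eps < PI /\ secular s eps (kf m) = 0.
Proof.
  intros hs heps hM. pose proof PI_RGT_0.
  apply (functional_choice (fun m k => (m < M)%nat ->
           in_band m k /\ k * eps < PI /\ secular s eps k = 0)).
  intro m. destruct (Nat.lt_ge_cases m M) as [hm|hm]; [|exists 0; lia].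
  assert (hme : (INR m + 1) * eps < / 2).
  { rewrite <- S_INR. apply Rle_lt_trans with (INR M * eps); [|exact hM].
    apply Rmult_le_compat_r; [lra|apply le_INR; lia]. }
  destruct (secular_root_exists s eps hs heps m hme) as [k [hk Hk]].
  exists k. intros _. split; [unfold in_band; lra|split; [|exact Hk]].
  assert (k * eps < (INR m + 1) * PI * eps) by (apply Rmult_lt_compat_r; lra).
  nra.
Qed.

Theorem lemma15 (s M : nat) (hs : (1 <= s)%nat) (hM : (1 <= M)%nat) :
  exists eps : R, 0 < eps /\
    forall n : nat, (1 <= n <= M)%nat ->
      exists lam : R,
        nth_eig s eps n lam /\
        simple_eig s eps lam /\
        (forall F : gfun, eigfun s eps lam F ->
           perm_invariant s eps F /\
           exactly_zeros_long (n - 1) F /\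
           no_zeros_small s eps F).
Proof.
  pose proof (pos_INR M).
  set (eps := / (2 * (INR M + 1))).
  assert (heps : 0 < eps) by (apply Rinv_0_lt_compat; lra).
  assert (hMe : INR M * eps < / 2).
  { assert ((INR M + 1) * eps = / 2) by (unfold eps; field; lra). lra. }
  destruct (secular_roots s eps M hs heps hMe) as [kf Hkf].
  exists eps. split; [exact heps|]. intros n hn.
  set (m := (n - 1)%nat). replace n with (S m) by (unfold m; lia).
  destruct (Hkf m ltac:(unfold m; lia)) as [hb [he hr]].
  exists (kf m * kf m). split; [|split].
  - split; [exists (profile eps (kf m)); exact (eigfun_profile s m eps (kf m) heps hb he hr)|split].
    + apply cnt_le_modes; [exact heps|intros i hi; apply Hkf; unfold m in *; lia].
    + exact (not_cnt_lt_mode s m eps (kf m) hs heps hb he hr).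
  - exact (simple_eig_mode s m eps (kf m) hs heps hb he hr).
  - intros F HF. exact (eigfun_mode_shape s m eps (kf m) hs heps hb he F HF).
Qed.
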